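(* Let $\mathcal I$ be an ideal of a Poisson $n$-Lie algebra $\mathcal P$ of arbitrary dimension. Define $\mathcal I^{1)}=\mathcal I$, $\mathcal I^{k+1)}=\mathcal I^{k)}\cdot\mathcal I$, and $\mathcal I^{(1}=\mathcal I$, $\mathcal I^{(k+1}=[\mathcal I^{(k},\mathcal I,\mathcal P,\dots,\mathcal P]$ for $k\ge1$. Then for every $k\ge1$, $$\mathcal I^k\subseteq\sum_{r_1+\cdots+r_t=k}\mathcal I^{r_1)}\cdot\prod_{i=2}^t\mathcal I^{(r_i},$$ where the sum is over all $t\ge1$ and nonnegative integers $r_1,\dots,r_t$ with $r_1+\cdots+r_t=k$, and factors $\mathcal I^{0)}$, $\mathcal I^{(0}$ are understood to act trivially (multiplication by them leaves the other factor unchanged).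
   Context: A Poisson $n$-Lie algebra is a commutative associative algebra $(\mathcal P,\cdot)$ with an $n$-linear skew-symmetric bracket satisfying the fundamental identity $[x_1,\dots,x_{n-1},[y_1,\dots,y_n]]=\sum_{i=1}^n[y_1,\dots,[x_1,\dots,x_{n-1},y_i],\dots,y_n]$ and the Leibniz rule $[y\cdot z,x_2,\dots,x_n]=y\cdot[z,x_2,\dots,x_n]+z\cdot[y,x_2,\dots,x_n]$. For subspaces, products and brackets denote linear spans. An ideal $\mathcal I$ satisfies $\mathcal P\cdot\mathcal I\subseteq\mathcal I$, $[\mathcal I,\mathcal P,\dots,\mathcal P]\subseteq\mathcal I$. Lower central series: $\mathcal I^1=\mathcal I$, $\mathcal I^{k+1}=[\mathcal I^k,\mathcal I,\mathcal P,\dots,\mathcal P]+\mathcal I^k\cdot\mathcal I$. *)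

From HB Require Import structures.
From mathcomp Require Import all_boot all_order all_algebra all_fingroup.
Set Implicit Arguments. Unset Strict Implicit. Unset Printing Implicit Defensive.
Import GRing.Theory.
Local Open Scope ring_scope.

Section PoissonNLie.
Variables (F : fieldType) (V : lmodType F) (n : nat).
Variable (mul : V -> V -> V) (br : ('I_n -> V) -> V).

Definition upd (x : 'I_n -> V) (j : 'I_n) (v : V) : 'I_n -> V :=
  fun i => if i == j then v else x i.

Record is_poisson_nlie : Prop := {
  mul_linl : forall a u v w, mul (a *: u + v) w = a *: mul u w + mul v w;
  mul_comm : forall u v, mul u v = mul v u;
  mul_assoc : forall u v w, mul u (mul v w) = mul (mul u v) w;
  br_multilinear : forall (x : 'I_n -> V) j a u v,
    br (upd x j (a *: u + v)) = a *: br (upd x j u) + br (upd x j v);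
  br_skew : forall (x : 'I_n -> V) (s : 'S_n),
    br (fun i => x (s i)) = (-1) ^+ (odd_perm s) *: br x;
  br_fundamental : forall (x y : 'I_n -> V) (j : 'I_n), nat_of_ord j = n.-1 ->
    br (upd x j (br y)) = \sum_(i < n) br (upd y i (br (upd x j (y i))));
  br_leibniz : forall (x : 'I_n -> V) (j : 'I_n) (y z : V), nat_of_ord j = 0%N ->
    br (upd x j (mul y z)) = mul y (br (upd x j z)) + mul z (br (upd x j y))
}.

Definition subspace (S : V -> Prop) : Prop :=
  S 0 /\ forall a u v, S u -> S v -> S (a *: u + v).

Definition span (X : V -> Prop) : V -> Prop :=
  fun v => forall S, subspace S -> (forall x, X x -> S x) -> S v.

Definition sumS (A B : V -> Prop) : V -> Prop := span (fun v => A v \/ B v).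

Definition prodS (A B : V -> Prop) : V -> Prop :=
  span (fun v => exists a b, A a /\ B b /\ v = mul a b).

Definition brS (A B : V -> Prop) : V -> Prop :=
  span (fun v => exists x : 'I_n -> V,
    (forall i : 'I_n, nat_of_ord i = 0%N -> A (x i)) /\
    (forall i : 'I_n, nat_of_ord i = 1%N -> B (x i)) /\ v = br x).

Definition ideal (I : V -> Prop) : Prop :=
  subspace I /\ (forall a b, I b -> I (mul a b)) /\
  (forall (x : 'I_n -> V) (j : 'I_n), nat_of_ord j = 0%N -> I (x j) -> I (br x)).

(* lower central series: lcs I k = I^k for k >= 1 (lcs I 0 = P, unused) *)
Fixpoint lcs (I : V -> Prop) (k : nat) : V -> Prop :=
  match k with
  | 0 => fun _ => True
  | k'.+1 => if k' is 0 then I else sumS (brS (lcs I k') I) (prodS (lcs I k') I)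
  end.

(* I^{k)} : I^{1)} = I, I^{k+1)} = I^{k)} . I  (k >= 1; value at 0 unused) *)
Fixpoint powA (I : V -> Prop) (k : nat) : V -> Prop :=
  match k with
  | 0 => fun _ => True
  | k'.+1 => if k' is 0 then I else prodS (powA I k') I
  end.

Fixpoint powB (I : V -> Prop) (k : nat) : V -> Prop :=
  match k with
  | 0 => fun _ => True
  | k'.+1 => if k' is 0 then I else brS (powB I k') I
  end.

(* multiplication where None is the trivially acting factor (I^{0)}, I^{(0}) *)
Definition mulopt (A B : option (V -> Prop)) : option (V -> Prop) :=
  match A, B with
  | None, _ => B
  | Some _, None => A
  | Some A', Some B' => Some (prodS A' B')
  end.

(* I^{r1)} . prod_{i>=2} I^{(r_i}  for r = r1 :: rs *)
Definition term (I : V -> Prop) (r1 : nat) (rs : seq nat) : option (V -> Prop) :=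
  foldl (fun acc ri => mulopt acc (if ri == 0%N then None else Some (powB I ri)))
        (if r1 == 0%N then None else Some (powA I r1)) rs.

Definition rhs (I : V -> Prop) (k : nat) : V -> Prop :=
  span (fun v => exists (r1 : nat) (rs : seq nat) (S : V -> Prop),
           (r1 + sumn rs)%N = k /\ term I r1 rs = Some S /\ S v).

End PoissonNLie.

(* I^{k+1} is spanned by products u.w and brackets
   [u, w, P, ..., P] with u in I^k, hence in the right-hand side for k, and
   w in I = I^{(1}.  A product just appends the factor I^{(1} to a term.  For a
   bracket, the Leibniz rule in the first slot gives
   [a.b, x, ...] = a.[b, x, ...] + b.[a, x, ...].  When b lies in the last
   factor I^{(r} of a term, the first summand raises that factor to I^{(r+1},
   and the second is the bracket of a shorter term (by induction on the term)
   multiplied by b; the leading factor I^{r+1)} = I^{r)}.I is split in the same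
   way. *)

From mathcomp Require Import all_boot all_order all_algebra all_fingroup.
From Stdlib Require Import FunctionalExtensionality.
Set Implicit Arguments. Unset Strict Implicit. Unset Printing Implicit Defensive.
Import GRing.Theory.
Local Open Scope ring_scope.

Section Span.
Variables (F : fieldType) (V : lmodType F).

Lemma span_gen (X : V -> Prop) v : X v -> span X v.
Proof. by move=> Xv S _; apply. Qed.

Lemma subspace_span (X : V -> Prop) : subspace (span X).
Proof.
split=> [S [] //|a u w hu hw S hS hX].
by case: (hS) => _ cl; apply: cl; [apply: hu | apply: hw].
Qed.

Lemma span_ind (X S : V -> Prop) :
  subspace S -> (forall x, X x -> S x) -> forall v, span X v -> S v.
Proof. by move=> hS hX v; apply. Qed.

Lemma subspaceD (S : V -> Prop) u w : subspace S -> S u -> S w -> S (u + w).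
Proof. by case=> _ cl hu hw; rewrite -[u]scale1r; apply: cl. Qed.

Lemma upd_id (n : nat) (x : 'I_n -> V) j : upd x j (x j) = x.
Proof.
by apply: functional_extensionality => i; rewrite /upd; case: eqP => [->|].
Qed.

End Span.

Section RightHandSide.
Variables (F : fieldType) (V : lmodType F) (n : nat).
Variables (mul : V -> V -> V) (br : ('I_n -> V) -> V).
Hypothesis hn : (2 <= n)%N.
Hypothesis HP : is_poisson_nlie mul br.
Variable I : V -> Prop.

Local Notation powB := (powB br I).
Local Notation term := (term mul br I).
Local Notation rhs := (rhs mul br I).

Definition slot0 : 'I_n := Ordinal (ltnW hn).
Definition slot1 : 'I_n := Ordinal hn.

Lemma mul0v (w : V) : mul 0 w = 0.
Proof.
have := mul_linl HP (-1) 0 0 w.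
by rewrite scaler0 addr0 scaleN1r addNr.
Qed.

Lemma br_upd0 x j : br (upd x j 0) = 0.
Proof.
have := br_multilinear HP x j (-1) 0 0.
by rewrite scaler0 addr0 scaleN1r addNr.
Qed.

Lemma subspace_mul_preimage (S : V -> Prop) b :
  subspace S -> subspace (fun w => S (mul b w)).
Proof.
case=> S0 cl; split=> [|a u v hu hv]; first by rewrite (mul_comm HP) mul0v.
by rewrite (mul_comm HP) (mul_linl HP) (mul_comm HP u) (mul_comm HP v); apply: cl.
Qed.

Lemma subspace_br_preimage (S : V -> Prop) x j :
  subspace S -> subspace (fun v => S (br (upd x j v))).
Proof.
case=> S0 cl; split=> [|a u v hu hv]; first by rewrite br_upd0.
by rewrite (br_multilinear HP); apply: cl.
Qed.

Lemma prodS_mul (A B : V -> Prop) a b : A a -> B b -> prodS mul A B (mul a b).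
Proof. by move=> ha hb; apply: span_gen; exists a, b. Qed.

Lemma brS_br_upd (A B : V -> Prop) x v :
  A v -> B (x slot1) -> brS br A B (br (upd x slot0 v)).
Proof.
move=> hA hB; apply: span_gen; exists (upd x slot0 v); split; [|split] => //.
  by move=> i hi; rewrite (_ : i = slot0) ?/upd ?eqxx //; apply: val_inj.
move=> i hi; rewrite (_ : i = slot1); last exact: val_inj.
by rewrite /upd -val_eqE.
Qed.

Lemma term_rcons r1 rs r : term r1 (rcons rs r) =
  mulopt mul (term r1 rs) (if r == 0%N then None else Some (powB r)).
Proof. by rewrite /term foldl_rcons. Qed.

Lemma rhs_term k r1 rs S v :
  (r1 + sumn rs)%N = k -> term r1 rs = Some S -> S v -> rhs k v.
Proof. by move=> hk hS hv; apply: span_gen; exists r1, rs, S. Qed.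

Lemma subspace_rhs k : subspace (rhs k).
Proof. exact: subspace_span. Qed.

Lemma rhs_mul_term r1 rs s T a c : term r1 rs = Some T -> T a -> powB s.+1 c ->
  rhs (r1 + sumn rs + s.+1) (mul a c).
Proof.
move=> hT ha hc; apply: (@rhs_term _ r1 (rcons rs s.+1) (prodS mul T (powB s.+1))).
- by rewrite -cats1 sumn_cat /= addn0 addnA.
- by rewrite term_rcons hT.
- exact: prodS_mul.
Qed.

Lemma rhs_mul_powB m s b w : powB s.+1 b -> rhs m w -> rhs (m + s.+1) (mul b w).
Proof.
move=> hb; move: w; apply: span_ind; first exact/subspace_mul_preimage/subspace_rhs.
move=> w [r1 [rs [T [<- [hT hw]]]]]; rewrite (mul_comm HP).
exact: rhs_mul_term hT hw hb.
Qed.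

Definition br_closed (m : nat) (S : V -> Prop) : Prop :=
  forall v x, S v -> I (x slot1) -> rhs m.+1 (br (upd x slot0 v)).

Lemma br_closed_span m (X : V -> Prop) : br_closed m X -> br_closed m (span X).
Proof.
move=> hX v x hv hx; move: v hv.
apply: span_ind => [|v hv]; first exact/subspace_br_preimage/subspace_rhs.
exact: hX.
Qed.

Lemma br_closed_powB m r1 rs s : (r1 + sumn rs)%N = m -> term r1 rs = None ->
  br_closed (m + s.+1) (powB s.+1).
Proof.
move=> <- hT v x hv hx.
apply: (@rhs_term _ r1 (rcons rs s.+2) (powB s.+2)); last exact: brS_br_upd.
- by rewrite -cats1 sumn_cat /= addn0 addnA addnS.
- by rewrite term_rcons hT.
Qed.

Lemma br_closed_prodS m r1 rs s T : (r1 + sumn rs)%N = m -> term r1 rs = Some T ->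
  br_closed m T -> br_closed (m + s.+1) (prodS mul T (powB s.+1)).
Proof.
move=> <- hT hTbr; apply: br_closed_span => _ x [a [b [ha [hb ->]]]] hx.
rewrite (br_leibniz HP) //; apply: (subspaceD (subspace_rhs _)).
  rewrite -addnS; apply: rhs_mul_term hT ha _; exact: brS_br_upd.
rewrite -addSn; apply: rhs_mul_powB hb _; exact: hTbr.
Qed.

Lemma br_closed_powA r : br_closed r.+1 (powA mul I r.+1).
Proof.
elim: r => [|r IH]; first exact: (@br_closed_powB 0 0 [::] 0).
by have := @br_closed_prodS _ r.+1 [::] 0 _ (addn0 _) erefl IH; rewrite addn1.
Qed.

Lemma br_closed_term r1 rs S : term r1 rs = Some S -> br_closed (r1 + sumn rs) S.
Proof.
elim/last_ind: rs S => [|rs r IH] S.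
  by case: r1 => [|r1] //= [<-]; rewrite addn0; apply: br_closed_powA.
rewrite term_rcons -cats1 sumn_cat /= addn0 addnA.
case hT: (term r1 rs) => [T|]; case: r => [|s] //= [<-].
- by rewrite addn0; apply: IH.
- exact: br_closed_prodS erefl hT (IH T hT).
- exact: br_closed_powB erefl hT.
Qed.

Lemma br_closed_rhs m : br_closed m (rhs m).
Proof.
apply: br_closed_span => v x [r1 [rs [S [<- [hS hv]]]]].
exact: br_closed_term hS v x hv.
Qed.

End RightHandSide.

Theorem lemma5p3 (F : fieldType) (V : lmodType F) (n : nat)
  (mul : V -> V -> V) (br : ('I_n -> V) -> V)
  (hn : (2 <= n)%N) (HP : is_poisson_nlie mul br)
  (I : V -> Prop) (HI : ideal mul br I) :
  forall k : nat, (1 <= k)%N ->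
    forall v : V, lcs mul br I k v -> rhs mul br I k v.
Proof.
elim=> [//|[|k] IH] _ v; first by apply: (rhs_term (r1 := 1) (rs := [::])).
have lcs_rhs : forall w, lcs mul br I k.+1 w -> rhs mul br I k.+1 w by exact: IH.
move: v; apply: span_ind => [|v [hv|hv]]; first exact: subspace_rhs.
- move: v hv; apply: span_ind => [|_ [x [hx0 [hx1 ->]]]]; first exact: subspace_rhs.
  rewrite -(upd_id x (slot0 hn)).
  exact: (br_closed_rhs HP (lcs_rhs _ (hx0 (slot0 hn) erefl)) (hx1 (slot1 hn) erefl)).
- move: v hv; apply: span_ind => [|_ [a [b [ha [hb ->]]]]]; first exact: subspace_rhs.
  rewrite (mul_comm HP) -addn1.
  exact: (rhs_mul_powB HP (s := 0)) hb (lcs_rhs _ ha).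
Qed.
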